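(* Let $n\ge1$ and let $M=M(h)$ be an $n\times n$ complex matrix of the form $M=D(I_n+E(h))D$, where $D(h)=\operatorname{diag}(\nu_j(h))$ is diagonal with $\nu_j(h)\in\mathbb C$ and $E(h)=\mathcal O(h^\infty)$ as $h\to0$. Then the eigenvalues of $M$ are of the form $\nu_j^2(h)(1+\mathcal O(h^\infty))$.
   Context: $E(h)=\mathcal O(h^\infty)$ means that for every $N$ there is $C_N$ with $\|E(h)\|\le C_Nh^N$ for $h$ small enough. *)

From HB Require Import structures.
From mathcomp Require Import all_boot all_order all_algebra.
From mathcomp Require Import complex.
From mathcomp Require Import reals.
Set Implicit Arguments. Unset Strict Implicit. Unset Printing Implicit Defensive.
Import Order.TTheory GRing.Theory Num.Theory.
Local Open Scope ring_scope.
Local Open Scope complex_scope.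

Definition Oinf (R : realType) (f : R -> R[i]) : Prop :=
  forall N : nat, exists C : R, exists h0 : R, 0 < h0 /\
    forall h : R, 0 < h < h0 -> `|f h| <= ((C * h ^+ N)%:C)%C.

(* matrix-valued O(h^oo): every entry is O(h^oo) (equivalent to any matrix norm) *)
Definition MOinf (R : realType) (n : nat) (E : R -> 'M[R[i]]_n) : Prop :=
  forall i j : 'I_n, Oinf (fun h => E h i j).

Definition Mmat (R : realType) (n : nat) (nu : 'I_n -> R -> R[i])
  (E : R -> 'M[R[i]]_n) (h : R) : 'M[R[i]]_n :=
  let D := diag_mx (\row_j nu j h) in D *m (1%:M + E h) *m D.

From HB Require Import structures.
From mathcomp Require Import all_boot all_order all_algebra.
From mathcomp Require Import complex.
From mathcomp Require Import reals.
From mathcomp Require Import boolp lra ring zify.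
Import Order.TTheory GRing.Theory Num.Theory.
Import Normc.

(* Write lam_j = nu_j^2 and esum = sum_(i,k) |E_ik|, and deform
   M(t) = D (I + t E) D from t = 0, where its eigenvalues are the lam_j, to
   t = 1.  A relative Gershgorin argument puts every eigenvalue of M(t),
   |t| <= 1, in one of the discs |z - lam_j| <= esum |lam_j|.  The
   characteristic polynomial is Lipschitz in t and its roots depend
   continuously on its coefficients, so along a fine subdivision of [0, 1] the
   roots can be labelled so that the j-th one always lies in a disc joined to
   the j-th disc by a chain of overlapping discs.  For esum <= 1/4 overlapping
   discs have comparable centres, so the j-th eigenvalue of M(1) is
   lam_j (1 + r_j) with |r_j| <= 2 8^n esum, and esum = O(h^oo). *)

Set Implicit Arguments.
Unset Strict Implicit.
Unset Printing Implicit Defensive.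
Local Open Scope ring_scope.

Section ComplexModulus.
Variable R : rcfType.
Implicit Types x y : R[i].

Lemma normc_ge0 x : 0 <= normc x.
Proof. by case: x => a b; rewrite /= sqrtr_ge0. Qed.

Lemma normcE x : `|x| = ((normc x)%:C)%C.
Proof. by case: x. Qed.

Lemma normc_real (r : R) : normc (r%:C)%C = `|r|.
Proof. by rewrite /= expr0n addr0 sqrtr_sqr. Qed.

Lemma normc_eq0 x : (normc x == 0) = (x == 0).
Proof. by apply/eqP/eqP => [/eq0_normc|->]; last exact: normc0. Qed.

Lemma normc_distC x y : normc (x - y) = normc (y - x).
Proof. exact: (@distrC _ (Rcomplex R)). Qed.

Lemma lerB_normc x y : normc x - normc y <= normc (x - y).
Proof. exact: (@lerB_dist _ (Rcomplex R)). Qed.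

Lemma normc_sum (I : Type) (s : seq I) (F : I -> R[i]) :
  normc (\sum_(i <- s) F i) <= \sum_(i <- s) normc (F i).
Proof. exact: (@ler_norm_sum _ (Rcomplex R)). Qed.

Lemma normc_prod (I : Type) (s : seq I) (F : I -> R[i]) :
  normc (\prod_(i <- s) F i) = \prod_(i <- s) normc (F i).
Proof. exact: (big_morph _ (@normcM R) (@normc1 R)). Qed.

Lemma normcX x k : normc (x ^+ k) = normc x ^+ k.
Proof. by elim: k => [|k IH]; rewrite ?normc1 // !exprS normcM IH. Qed.

End ComplexModulus.

Section RootsOfPolynomials.
Variable R : rcfType.
Local Notation C := R[i].
Implicit Types (x y z : C) (s a b : seq C) (p q : {poly C}).

Definition poly_of_roots s : {poly C} := \prod_(x <- s) ('X - x%:P).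

Lemma poly_of_roots_cons x s :
  poly_of_roots (x :: s) = ('X - x%:P) * poly_of_roots s.
Proof. exact: big_cons. Qed.

Lemma poly_of_roots_perm s1 s2 :
  perm_eq s1 s2 -> poly_of_roots s1 = poly_of_roots s2.
Proof. exact: perm_big. Qed.

Lemma size_poly_of_roots s : size (poly_of_roots s) = (size s).+1.
Proof. exact: size_prod_XsubC. Qed.

Lemma horner_poly_of_roots s z : (poly_of_roots s).[z] = \prod_(y <- s) (z - y).
Proof. by rewrite horner_prod; apply: eq_bigr => y _; rewrite hornerXsubC. Qed.

Lemma size_poly_of_rootsB a b :
  size a = size b -> (size (poly_of_roots a - poly_of_roots b)%R <= (size b).+1)%N.
Proof.
move=> sab; apply: leq_trans (size_polyD _ _) _.
by rewrite size_polyN !size_poly_of_roots sab maxnn.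
Qed.

Lemma coef_XsubCM x p k :
  (('X - x%:P) * p)`_k = (if k is k'.+1 then p`_k' else 0) - x * p`_k.
Proof. by rewrite mulrBl coefB coefXM coefCM; case: k. Qed.

Lemma coef_poly_of_roots_le (B : R) s k : 0 <= B ->
  {in s, forall x, normc x <= B} -> normc (poly_of_roots s)`_k <= (1 + B) ^+ size s.
Proof.
move=> B0; elim: s k => [|x s IH] k sB.
  by rewrite /poly_of_roots big_nil coefC; case: eqP; rewrite ?normc1 ?normc0.
have {}IH k' : normc (poly_of_roots s)`_k' <= (1 + B) ^+ size s.
  by apply: IH => y ys; apply: sB; rewrite inE ys orbT.
have xB : normc x <= B by apply: sB; rewrite mem_head.
rewrite poly_of_roots_cons coef_XsubCM exprS.
apply: le_trans (le_normcD _ _) _; rewrite normcN normcM.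
have shift : normc (if k is k'.+1 then (poly_of_roots s)`_k' else 0) <= (1 + B) ^+ size s.
  by case: k => [|k]; rewrite ?normc0 ?exprn_ge0 ?addr_ge0.
have := IH k; have := normc_ge0 x; have := normc_ge0 (poly_of_roots s)`_k.
set P := (1 + B) ^+ size s in shift *; nra.
Qed.

Lemma normc_horner_le (B eta : R) p (m : nat) z :
  1 <= B -> (size p <= m)%N -> (forall k, normc p`_k <= eta) -> normc z <= B ->
  normc p.[z] <= eta * m%:R * B ^+ m.
Proof.
move=> B1 sp pe zB; have eta0 : 0 <= eta := le_trans (normc_ge0 _) (pe 0%N).
rewrite horner_coef; apply: le_trans (normc_sum _ _) _.
apply: (@le_trans _ _ (\sum_(i < size p) eta * B ^+ m)).
  apply: ler_sum => i _; rewrite normcM normcX.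
  apply: ler_pM; rewrite ?exprn_ge0 ?normc_ge0 //.
  apply: (@le_trans _ _ (B ^+ i)); first by apply: lerXn2r; rewrite ?nnegrE ?normc_ge0 //; lra.
  by apply: ler_weXn2l => //; apply: leq_trans sp; apply: ltnW.
rewrite sumr_const card_ord mulrAC -[leLHS]mulr_natr.
by apply: ler_wpM2l; rewrite ?ler_nat // mulr_ge0 // exprn_ge0 //; lra.
Qed.

Lemma coef_deflate_le (B eta : R) x p (m : nat) :
  1 <= B -> normc x <= B -> (size p <= m)%N ->
  (forall k, normc (('X - x%:P) * p)`_k <= eta) ->
  forall k, normc p`_k <= eta * m%:R * B ^+ m.
Proof.
move=> B1 xB sp ge k; have B0 : 0 <= B by lra.
have eta0 : 0 <= eta := le_trans (normc_ge0 _) (ge 0%N).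
have top j : (j <= m)%N -> normc p`_(m - j) <= eta * j%:R * B ^+ j.
  elim: j => [|j IH] jm; first by rewrite subn0 nth_default // normc0 !mulr0 mul0r.
  have pE : p`_(m - j.+1) = (('X - x%:P) * p)`_(m - j) + x * p`_(m - j).
    have -> : (m - j = (m - j.+1).+1)%N by lia.
    by rewrite coef_XsubCM subrK.
  rewrite pE; apply: le_trans (le_normcD _ _) _; rewrite normcM.
  have {}IH := IH (ltnW jm).
  have xp : normc x * normc p`_(m - j) <= B * (eta * j%:R * B ^+ j).
    by apply: ler_pM; rewrite ?normc_ge0.
  have eBP : eta <= eta * (B * B ^+ j) by rewrite ler_peMr // -exprS exprn_ege1.
  have := ge (m - j)%N; rewrite exprS -natr1; set P := B ^+ j in xp eBP *.
  have -> : eta * (j%:R + 1) * (B * P) = B * (eta * j%:R * P) + eta * (B * P) by ring.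
  lra.
have mono j : (j <= m)%N -> eta * j%:R * B ^+ j <= eta * m%:R * B ^+ m.
  move=> jm; apply: ler_pM; rewrite ?exprn_ge0 ?mulr_ge0 ?ler0n //.
    by rewrite ler_wpM2l // ler_nat.
  exact: ler_weXn2l.
case: (leqP k m) => km; last first.
  by rewrite nth_default ?normc0 ?mulr_ge0 ?ler0n ?exprn_ge0 // (leq_trans sp (ltnW km)).
have := top (m - k)%N (leq_subr _ _); rewrite subKn // => /le_trans; apply.
by apply: mono; rewrite leq_subr.
Qed.

End RootsOfPolynomials.

Section RootMatching.
Variable R : rcfType.
Local Notation C := R[i].
Implicit Types (x y : C) (a b : seq C).

Lemma exists_near_root (eta : R) x b : 0 <= eta ->
  normc (poly_of_roots b).[x] < eta ^+ size b ->
  exists2 y, y \in b & normc (x - y) < eta.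
Proof.
move=> eta0 small.
have [/hasP [y yb xy]|/hasPn far] := boolP (has (fun y => normc (x - y) < eta) b).
  by exists y.
suff : eta ^+ size b <= normc (poly_of_roots b).[x] by rewrite leNgt small.
rewrite horner_poly_of_roots normc_prod; elim: b far {small} => [|y b IH] far.
  by rewrite big_nil.
rewrite big_cons exprS; apply: ler_pM; rewrite ?exprn_ge0 //.
  by rewrite leNgt; apply: far; rewrite mem_head.
by apply: IH => z zb; apply: far; rewrite inE zb orbT.
Qed.

Lemma normc_eval_at_root_le (B del : R) x a b :
  1 <= B -> normc x <= B -> x \in a -> size a = size b ->
  (forall k, normc ((poly_of_roots a)`_k - (poly_of_roots b)`_k) <= del) ->
  normc (poly_of_roots b).[x] <= del * (size b).+1%:R * B ^+ (size b).+1.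
Proof.
move=> B1 xB xa sab close.
have /rootP ax : root (poly_of_roots a) x by rewrite root_prod_XsubC.
have -> : (poly_of_roots b).[x] = - (poly_of_roots a - poly_of_roots b).[x].
  by rewrite hornerD hornerN ax sub0r opprK.
rewrite normcN; apply: normc_horner_le => // [|k]; first exact: size_poly_of_rootsB.
by rewrite coefB.
Qed.

Lemma coef_deflate_roots_le (B del eta : R) x y a b :
  1 <= B -> normc x <= B -> {in b, forall z, normc z <= B} -> size a = size b ->
  normc (x - y) <= eta ->
  (forall k, normc ((poly_of_roots (x :: a))`_k - (poly_of_roots (y :: b))`_k) <= del) ->
  forall k, normc ((poly_of_roots a)`_k - (poly_of_roots b)`_k)
            <= (del + eta * (1 + B) ^+ size b) * (size b).+1%:R * B ^+ (size b).+1.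
Proof.
move=> B1 xB bB sab xy close k; rewrite -coefB.
apply: coef_deflate_le xB _ _ k => // [|j]; first exact: size_poly_of_rootsB.
have -> : ('X - x%:P) * (poly_of_roots a - poly_of_roots b) =
    (poly_of_roots (x :: a) - poly_of_roots (y :: b)) + (x - y)%:P * poly_of_roots b.
  by rewrite !poly_of_roots_cons rmorphB /=; ring.
rewrite coefD coefCM; apply: le_trans (le_normcD _ _) _; rewrite normcM.
apply: lerD; first by rewrite coefB.
by apply: ler_pM; rewrite ?normc_ge0 // coef_poly_of_roots_le //; lra.
Qed.

Lemma near_root_deflate (B del eta : R) x a b :
  1 <= B -> normc x <= B -> {in b, forall z, normc z <= B} -> size b = (size a).+1 ->
  0 <= eta -> del * (size b).+1%:R * B ^+ (size b).+1 < eta ^+ size b ->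
  (forall k, normc ((poly_of_roots (x :: a))`_k - (poly_of_roots b)`_k) <= del) ->
  exists y b1, [/\ perm_eq b (y :: b1), normc (x - y) < eta &
    forall k, normc ((poly_of_roots a)`_k - (poly_of_roots b1)`_k)
      <= (del + eta * (1 + B) ^+ size a) * (size a).+1%:R * B ^+ (size a).+1].
Proof.
move=> B1 xB bB sb eta0 small close.
have [y yb xy] : exists2 y, y \in b & normc (x - y) < eta.
  apply: exists_near_root => //; apply: le_lt_trans small.
  by apply: normc_eval_at_root_le B1 xB (mem_head _ _) _ close; rewrite sb.
have pb := perm_to_rem yb; exists y, (rem y b); split => //.
have sab : size a = size (rem y b) by rewrite size_rem // sb.
rewrite sab; apply: coef_deflate_roots_le B1 xB _ sab (ltW xy) _.
  by move=> z /mem_rem; apply: bB.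
by rewrite -(poly_of_roots_perm pb).
Qed.

Lemma matching_tolerances (B d del1 : R) (n : nat) : 1 <= B -> 0 < d -> 0 < del1 ->
  exists eta del : R, [/\ 0 < eta, eta <= d, 0 < del,
    del * n.+2%:R * B ^+ n.+2 < eta ^+ n.+1 &
    (del + eta * (1 + B) ^+ n) * n.+1%:R * B ^+ n.+1 <= del1].
Proof.
move=> B1 d0 del1_gt0; have B0 : 0 <= B by lra.
pose X := n.+1%:R * B ^+ n.+1.
pose K := n.+2%:R * B ^+ n.+2 + (1 + B) ^+ n * X.
have X0 : 0 <= X by rewrite mulr_ge0 ?exprn_ge0.
have P1 : 1 <= (1 + B) ^+ n by rewrite exprn_ege1 //; lra.
have KX1 : n.+2%:R * B ^+ n.+2 <= K by rewrite lerDl mulr_ge0 //; lra.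
have KX2 : (1 + B) ^+ n * X <= K by rewrite lerDr mulr_ge0 ?exprn_ge0 ?ler0n.
have XK : X <= K by apply: le_trans KX2; rewrite ler_peMl.
have K0 : 0 < K by apply: lt_le_trans KX1; rewrite mulr_gt0 ?exprn_gt0 //; lra.
pose c := del1 / (2 * K).
have c0 : 0 < c by rewrite divr_gt0 ?mulr_gt0.
have cK : c * K = del1 / 2 by rewrite /c; field; rewrite gt_eqF.
pose eta := Order.min d c; exists eta.
have eta0 : 0 < eta by rewrite lt_min d0.
have [etad etac] : eta <= d /\ eta <= c by rewrite !ge_min !lexx orbT.
pose del := Order.min c (eta ^+ n.+1 / (2 * K)); exists del.
have del0 : 0 < del by rewrite lt_min c0 divr_gt0 ?mulr_gt0 ?exprn_gt0.
have [delc dele] : del <= c /\ del <= eta ^+ n.+1 / (2 * K) by rewrite !ge_min !lexx orbT.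
split => //.
  rewrite -mulrA; apply: (@le_lt_trans _ _ (del * K)); first by rewrite ler_wpM2l //; lra.
  have := ler_wpM2r (ltW K0) dele.
  have -> : eta ^+ n.+1 / (2 * K) * K = eta ^+ n.+1 / 2 by field; rewrite gt_eqF.
  by have := exprn_gt0 n.+1 eta0; lra.
have h1 : del * X <= c * K by apply: ler_pM; lra.
have h2 : eta * ((1 + B) ^+ n * X) <= c * K.
  by apply: ler_pM => //; [lra | rewrite mulr_ge0 //; lra].
have -> : (del + eta * (1 + B) ^+ n) * n.+1%:R * B ^+ n.+1 =
    del * X + eta * ((1 + B) ^+ n * X) by rewrite /X; ring.
lra.
Qed.

Lemma roots_match (B d : R) (n : nat) : 1 <= B -> 0 < d ->
  exists2 del : R, 0 < del & forall a b, size a = n -> size b = n ->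
    {in a, forall x, normc x <= B} -> {in b, forall y, normc y <= B} ->
    (forall k, normc ((poly_of_roots a)`_k - (poly_of_roots b)`_k) <= del) ->
    exists2 b', perm_eq b b' &
      forall i, (i < n)%N -> normc (nth 0 a i - nth 0 b' i) < d.
Proof.
move=> B1; elim: n d => [|n IH] d d0; first by exists 1 => // a b _ _ _ _ _; exists b.
have [del1 del1_gt0 match1] := IH d d0.
have [eta [del [eta0 etad del0 small deflated]]] := matching_tolerances n B1 d0 del1_gt0.
exists del => // -[//|x a] b [sa] sb aB bB close.
have sba : size b = (size a).+1 by rewrite sb sa.
rewrite -sb in small.
have [y [b1 [pb xy close1]]] :=
  near_root_deflate B1 (aB x (mem_head _ _)) bB sba (ltW eta0) small close.
have [b1' pb1 near1] : exists2 b1', perm_eq b1 b1' &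
    forall i, (i < n)%N -> normc (nth 0 a i - nth 0 b1' i) < d.
  apply: match1 => // [|z za|z zb|k]; first by have := perm_size pb; rewrite sb => -[].
  - by apply: aB; rewrite inE za orbT.
  - by apply: bB; rewrite (perm_mem pb) inE zb orbT.
  - by apply: le_trans (close1 k) _; rewrite sa.
exists (y :: b1'); first by rewrite (perm_trans pb) // perm_cons.
by case=> [|i] /= Hi; [exact: lt_le_trans xy etad | exact: near1].
Qed.

End RootMatching.

Lemma ler_sum_term (R : numDomainType) (I : finType) (F : I -> R) j :
  (forall i, 0 <= F i) -> F j <= \sum_i F i.
Proof. by move=> F0; rewrite (bigD1 j) //= lerDl sumr_ge0. Qed.

Lemma row_nz_entry (V : nmodType) (m : nat) (v : 'rV[V]_m) :
  v != 0 -> exists i, v 0 i != 0.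
Proof.
move=> v0; have [i vi|v0'] := pickP (fun i => v 0 i != 0); first by exists i.
by case/eqP: v0; apply/rowP => i; rewrite mxE; apply/eqP/negbFE/v0'.
Qed.

Section AffineMatrixFamily.
Variables (R : rcfType) (n : nat).
Local Notation C := R[i].

Lemma char_poly_split (A : 'M[C]_n) :
  exists2 s, size s = n & char_poly A = poly_of_roots s.
Proof.
have [s As] := closed_field_poly_normal (char_poly A).
rewrite (monicP (char_poly_monic A)) scale1r in As.
exists s => //; have := size_char_poly A.
by rewrite As size_poly_of_roots => -[].
Qed.

Lemma horner_lipschitz (c : {poly C}) (t s : C) : normc t <= 1 -> normc s <= 1 ->
  normc (c.[t] - c.[s]) <= (\sum_(i < size c) normc c`_i * i%:R) * normc (t - s).
Proof.
move=> t1 s1; rewrite !horner_coef -sumrB mulr_suml.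
apply: le_trans (normc_sum _ _) _; apply: ler_sum => i _.
rewrite -mulrBr subrXX !normcM -mulrA ler_wpM2l ?normc_ge0 // mulrC ler_wpM2r ?normc_ge0 //.
apply: le_trans (normc_sum _ _) _.
apply: (@le_trans _ _ (\sum_(j < i) (1 : R))); last by rewrite sumr_const card_ord.
apply: ler_sum => j _; rewrite normcM !normcX -[1]mulr1.
by apply: ler_pM; rewrite ?exprn_ge0 ?normc_ge0 ?exprn_ile1 ?normc_ge0.
Qed.

Lemma coef_char_poly_lipschitz (A F : 'M[C]_n) : exists2 L : R, 0 <= L &
  forall t s k, normc t <= 1 -> normc s <= 1 ->
  normc ((char_poly (A + t *: F))`_k - (char_poly (A + s *: F))`_k)
    <= L * normc (t - s).
Proof.
pose AX : 'M[{poly C}]_n := \matrix_(i, j) ((A i j)%:P + F i j *: 'X).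
pose P := char_poly AX.
have coefE t k : (char_poly (A + t *: F))`_k = (P`_k).[t].
  have -> : A + t *: F = map_mx (horner_eval t) AX.
    apply/matrixP => i j; rewrite !mxE /= horner_evalE.
    by rewrite hornerD hornerC hornerZ hornerX mulrC.
  by rewrite -map_char_poly coef_map.
pose Lc (c : {poly C}) := \sum_(i < size c) normc c`_i * i%:R.
have Lc0 c : 0 <= Lc c by apply: sumr_ge0 => i _; rewrite mulr_ge0 ?normc_ge0 ?ler0n.
exists (\sum_(k < size P) Lc P`_k) => [|t s k t1 s1]; first exact: sumr_ge0.
have := horner_lipschitz P`_k t1 s1; rewrite -coefE -coefE => /le_trans; apply.
rewrite ler_wpM2r ?normc_ge0 //; have [kP|Pk] := ltnP k (size P).
  by rewrite /Lc (bigD1 (Ordinal kP)) //= lerDl; apply: sumr_ge0 => i _; apply: Lc0.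
rewrite nth_default // /Lc size_poly0 big_ord0.
by apply: sumr_ge0 => i _; apply: Lc0.
Qed.

End AffineMatrixFamily.

Section RelativeGershgorin.
Variables (R : rcfType) (n : nat) (nu : 'I_n -> R[i]) (E : 'M[R[i]]_n).
Local Notation C := R[i].

Definition lam j : C := nu j ^+ 2.
Definition Dnu : 'M[C]_n := diag_mx (\row_j nu j).
Definition Mt (t : C) : 'M[C]_n := Dnu *m (1%:M + t *: E) *m Dnu.
Definition esum : R := \sum_i \sum_j normc (E i j).
Definition in_disc j (z : C) := normc (z - lam j) <= esum * normc (lam j).
Definition lams : seq C := map lam (enum 'I_n).

Lemma esum_ge0 : 0 <= esum.
Proof. by do 2!(apply: sumr_ge0 => ? _); apply: normc_ge0. Qed.

Lemma in_disc_lam j : in_disc j (lam j).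
Proof. by rewrite /in_disc subrr normc0 mulr_ge0 ?esum_ge0 ?normc_ge0. Qed.

Lemma size_lams : size lams = n.
Proof. by rewrite size_map size_enum_ord. Qed.

Lemma nth_lams (j : 'I_n) : nth 0 lams j = lam j.
Proof. by rewrite (nth_map j) ?size_enum_ord // nth_ord_enum. Qed.

Lemma MtE t : Mt t = Mt 0 + t *: (Dnu *m E *m Dnu).
Proof.
by rewrite /Mt scale0r addr0 !mulmx1 mulmxDr mulmx1 mulmxDl -scalemxAr -scalemxAl.
Qed.

Lemma char_poly_Mt0 : char_poly (Mt 0) = poly_of_roots lams.
Proof.
have -> : Mt 0 = diag_mx (\row_j lam j).
  apply/matrixP => i j; rewrite /Mt scale0r addr0 mulmx1 mul_mx_diag !mxE.
  by case: eqVneq => [->|_]; rewrite ?mulr1n ?mulr0n ?mul0r // expr2.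
rewrite char_poly_trig ?diag_mx_is_trig // /poly_of_roots big_map big_enum /=.
by apply: eq_bigr => i _; rewrite !mxE eqxx mulr1n.
Qed.

Lemma left_eigenvector_eq t mu (v : 'rV[C]_n) : v *m Mt t = mu *: v ->
  forall i, ((v *m Dnu) 0 i + t * \sum_k (v *m Dnu) 0 k * E k i) * lam i
            = mu * (v *m Dnu) 0 i.
Proof.
move=> vM i; set y := v *m Dnu; have DnuE (w : 'rV[C]_n) : (w *m Dnu) 0 i = w 0 i * nu i.
  by rewrite mul_mx_diag !mxE.
have := congr1 (fun w : 'rV_n => w 0 i * nu i) vM.
rewrite /Mt !mulmxA -/y DnuE [(mu *: v) 0 i]mxE.
have -> : (y *m (1%:M + t *: E)) 0 i = y 0 i + t * \sum_k y 0 k * E k i.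
  by rewrite mulmxDr mulmx1 -scalemxAr !mxE.
by move=> h; rewrite /lam expr2 mulrA h -mulrA -DnuE.
Qed.

Lemma eigenvalue_in_disc_degenerate t mu (v : 'rV[C]_n) :
  v *m Mt t = mu *: v -> v != 0 -> v *m Dnu = 0 -> exists j, in_disc j mu.
Proof.
move=> vM v0 vD0; have [i vi] := row_nz_entry v0.
have nui : nu i = 0.
  have := congr1 (fun w : 'rV_n => w 0 i) vD0.
  by rewrite mul_mx_diag !mxE => /eqP; rewrite mulf_eq0 (negbTE vi) => /eqP.
have mu0 : mu = 0.
  have : mu *: v = 0 by rewrite -vM /Mt !mulmxA vD0 !mul0mx.
  by move/eqP; rewrite scalemx_eq0 (negbTE v0) orbF => /eqP.
by exists i; rewrite /in_disc /lam mu0 nui expr2 mulr0 subrr normc0 mulr0.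
Qed.

Lemma eigenvalue_in_disc t mu : normc t <= 1 ->
  root (char_poly (Mt t)) mu -> exists j, in_disc j mu.
Proof.
move=> t1; rewrite -eigenvalue_root_char => /eigenvalueP [v vM v0].
have [vD0|] := eqVneq (v *m Dnu) 0; first exact: eigenvalue_in_disc_degenerate vM v0 vD0.
have rowE := left_eigenvector_eq vM; set y := v *m Dnu in rowE * => /row_nz_entry [i0 yi0].
pose i := [arg max_(i > i0) normc (y 0 i)]%O.
have imax k : normc (y 0 k) <= normc (y 0 i).
  by rewrite /i; case: arg_maxP => // j _ jmax; apply: jmax.
have yi_gt0 : 0 < normc (y 0 i).
  by apply: lt_le_trans (imax i0); rewrite lt_def normc_eq0 yi0 normc_ge0.
have sumE : normc (\sum_k y 0 k * E k i) <= normc (y 0 i) * esum.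
  apply: le_trans (normc_sum _ _) _; rewrite mulr_sumr; apply: ler_sum => k _.
  rewrite normcM; apply: ler_pM; rewrite ?normc_ge0 //.
  exact: ler_sum_term i (fun j => normc_ge0 (E k j)).
exists i; rewrite /in_disc -(ler_pM2r yi_gt0) -normcM.
have -> : (mu - lam i) * y 0 i = lam i * (t * \sum_k y 0 k * E k i).
  by rewrite mulrBl -rowE; ring.
rewrite normcM [normc (t * _)]normcM.
have tS : normc t * normc (\sum_k y 0 k * E k i) <= normc (y 0 i) * esum.
  by rewrite -[_ * esum]mul1r; apply: ler_pM; rewrite ?normc_ge0.
have := normc_ge0 (lam i); nra.
Qed.

Definition overlap : rel 'I_n := fun a b =>
  normc (lam a - lam b) <= esum * (normc (lam a) + normc (lam b)).

Definition separation (p : 'I_n * 'I_n) : R :=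
  normc (lam p.1 - lam p.2) - esum * (normc (lam p.1) + normc (lam p.2)).

Definition disc_gap : R := \big[Order.min/1]_(p | ~~ overlap p.1 p.2) separation p.

Lemma disc_gap_gt0 : 0 < disc_gap.
Proof.
apply: (big_ind (fun x => 0 < x)) => // [x y x0 y0|p]; first by rewrite lt_min x0.
by rewrite /overlap -ltNge subr_gt0.
Qed.

Lemma overlap_of_close a b z w :
  in_disc a z -> in_disc b w -> normc (z - w) < disc_gap -> overlap a b.
Proof.
move=> za wb zw; apply/negPn/negP => ab.
have := bigmin_le_cond 1 separation (ab : (fun p => ~~ overlap p.1 p.2) (a, b)).
rewrite -/disc_gap /separation /= => gap.
have tri : normc (lam a - lam b) <= normc (z - lam a) + (normc (z - w) + normc (w - lam b)).
  have -> : lam a - lam b = - (z - lam a) + ((z - w) + (w - lam b)) by ring.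
  by apply: le_trans (le_normcD _ _) _; rewrite normcN lerD2l le_normcD.
move: za wb; rewrite /in_disc; lra.
Qed.

Lemma overlap_le a b : esum <= 1 / 4 -> overlap a b ->
  normc (lam b) <= 2 * normc (lam a) /\ normc (lam b - lam a) <= 3 * esum * normc (lam a).
Proof.
rewrite /overlap normc_distC => small ab; have tri := lerB_normc (lam b) (lam a).
have eA : esum * normc (lam a) <= 1 / 4 * normc (lam a) by rewrite ler_wpM2r ?normc_ge0.
have eB : esum * normc (lam b) <= 1 / 4 * normc (lam b) by rewrite ler_wpM2r ?normc_ge0.
have ba : normc (lam b) <= 2 * normc (lam a) by have := normc_ge0 (lam a); lra.
have := ler_wpM2l esum_ge0 ba; lra.
Qed.

Lemma path_overlap_le x p : esum <= 1 / 4 -> path overlap x p ->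
  normc (lam (last x p)) <= 8 ^+ size p * normc (lam x) /\
  normc (lam (last x p) - lam x) <= esum * 8 ^+ size p * normc (lam x).
Proof.
move=> small; elim: p x => [|y p IH] x /=.
  by move=> _; rewrite expr0 mul1r mulr1 subrr normc0 mulr_ge0 ?esum_ge0 ?normc_ge0.
case/andP => /(overlap_le small) [yx yxd] /IH [lasty lastyd].
have tri : normc (lam (last y p) - lam x) <=
    normc (lam (last y p) - lam y) + normc (lam y - lam x).
  by have := le_normcD (lam (last y p) - lam y) (lam y - lam x); rewrite addrA subrK.
have P1 : 1 <= 8 ^+ size p :> R by apply: exprn_ege1; rewrite ler1n.
have e0 := esum_ge0; have x0 := normc_ge0 (lam x); have y0 := normc_ge0 (lam y).
rewrite exprS; set P := 8 ^+ size p in P1 lasty lastyd *.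
split; first nra.
have h1 : esum * P * normc (lam y) <= esum * P * (2 * normc (lam x)).
  by apply: ler_wpM2l; rewrite ?mulr_ge0 //; lra.
have h2 : esum * normc (lam x) <= esum * normc (lam x) * P by rewrite ler_peMr ?mulr_ge0.
have h3 : 0 <= esum * P * normc (lam x) by rewrite !mulr_ge0 //; lra.
lra.
Qed.

Lemma connect_overlap_le j b : esum <= 1 / 4 -> connect overlap j b ->
  normc (lam b) <= 8 ^+ n * normc (lam j) /\
  normc (lam b - lam j) <= esum * 8 ^+ n * normc (lam j).
Proof.
move=> small /connectP [p jp ->]; have [q jq uq _] := shortenP jp.
have [bq bqd] := path_overlap_le small jq.
have qn : (size q <= n)%N.
  by have := max_card (mem (j :: q)); rewrite card_ord (card_uniqP uq) /= => /ltnW.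
have P8 : 8 ^+ size q <= 8 ^+ n :> R by rewrite ler_weXn2l // ler1n.
have e0 := esum_ge0; have j0 := normc_ge0 (lam j).
split; first by apply: le_trans bq _; rewrite ler_wpM2r.
by apply: le_trans bqd _; rewrite -!mulrA ler_wpM2l // ler_wpM2r.
Qed.

End RelativeGershgorin.

Section Homotopy.
Variables (R : realType) (n : nat) (nu : 'I_n -> R[i]) (E : 'M[R[i]]_n).
Hypothesis esum_small : esum E <= 1 / 4.
Local Notation C := R[i].
Local Notation lam := (lam nu).
Local Notation Mt := (Mt nu E).
Local Notation in_disc := (in_disc nu E).
Local Notation overlap := (overlap nu E).

Definition tracks (t : C) (m : seq C) :=
  [/\ size m = n, char_poly (Mt t) = poly_of_roots m &
      forall j : 'I_n, exists2 b, connect overlap j b & in_disc b (nth 0 m j)].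

Lemma tracks0 : tracks 0 (lams nu).
Proof.
split; [exact: size_lams | exact: char_poly_Mt0 | move=> j].
by exists j; rewrite ?connect0 // nth_lams in_disc_lam.
Qed.

Lemma in_disc_bounded b z : in_disc b z -> normc z <= 1 + 2 * \sum_j normc (lam j).
Proof.
rewrite /in_disc => zb; have := le_normcD (z - lam b) (lam b); rewrite subrK.
have lb : normc (lam b) <= \sum_j normc (lam j).
  exact: ler_sum_term b (fun j => normc_ge0 _).
have := ler_wpM2r (normc_ge0 (lam b)) esum_small; have := normc_ge0 (lam b); lra.
Qed.

Lemma tracks_continue : exists2 del : R, 0 < del & forall t s m,
  normc s <= 1 -> tracks t m ->
  (forall k, normc ((char_poly (Mt t))`_k - (char_poly (Mt s))`_k) <= del) ->
  exists m', tracks s m'.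
Proof.
have B1 : 1 <= 1 + 2 * \sum_j normc (lam j).
  by rewrite lerDl mulr_ge0 // sumr_ge0 // => j _; apply: normc_ge0.
have [del del0 rmatch] := roots_match n B1 (disc_gap_gt0 nu E).
exists del => // t s m s1 [sm tm mdisc] close.
have [r rs sr] := char_poly_split (Mt s).
have rdisc x : x \in r -> exists c, in_disc c x.
  by move=> xr; apply: eigenvalue_in_disc s1 _; rewrite sr root_prod_XsubC.
have [r' rr' near] : exists2 r', perm_eq r r' &
    forall i, (i < n)%N -> normc (nth 0 m i - nth 0 r' i) < disc_gap nu E.
  apply: rmatch => //; last by rewrite -tm -sr.
    move=> x /(nthP 0) [i im <-]; rewrite sm in im.
    by have [b _ /in_disc_bounded] := mdisc (Ordinal im).
  by move=> x /rdisc [c /in_disc_bounded].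
exists r'; split; first by rewrite -(perm_size rr').
  by rewrite sr (poly_of_roots_perm rr').
move=> j; have [b jb mb] := mdisc j.
have [c rc] : exists c, in_disc c (nth 0 r' j).
  by apply: rdisc; rewrite (perm_mem rr') mem_nth // -(perm_size rr') rs.
exists c => //; apply: connect_trans jb (connect1 _).
exact: overlap_of_close mb rc (near j (ltn_ord j)).
Qed.

Lemma tracks_Mt1 : exists m, tracks 1 m.
Proof.
have [del del0 cont] := tracks_continue.
have [L L0 lip] := coef_char_poly_lipschitz (Mt 0) (Dnu nu *m E *m Dnu nu).
pose K := (Num.Def.archi_bound (L / del)).+1.
have K0 : 0 < K%:R :> R by rewrite ltr0n.
have LK : L / del < K%:R.
  apply: lt_le_trans (archi_boundP _) _; first by rewrite divr_ge0 // ltW.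
  by rewrite ler_nat.
pose tk k : C := ((k%:R / K%:R)%:C)%C.
have tk1 k : (k <= K)%N -> normc (tk k) <= 1.
  move=> kK; rewrite normc_real ger0_norm ?divr_ge0 ?ler0n //.
  by rewrite ler_pdivrMr // mul1r ler_nat.
have tk_step k : L * normc (tk k - tk k.+1) <= del.
  rewrite normc_distC /tk -(rmorphB (real_complex R)) normc_real -mulrBl -natrB //.
  rewrite subSnn mul1r ger0_norm ?invr_ge0 ?ler0n // ler_pdivrMr // mulrC.
  by apply/ltW; rewrite -ltr_pdivrMr.
suff : forall k, (k <= K)%N -> exists m, tracks (tk k) m.
  by move/(_ K (leqnn K)); rewrite /tk divff ?gt_eqF.
elim=> [_|k IH kK]; first by exists (lams nu); rewrite /tk mul0r; exact: tracks0.
have [m tm] := IH (ltnW kK).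
apply: cont (tk1 _ kK) tm _ => i; rewrite (MtE _ _ (tk k)) (MtE _ _ (tk k.+1)).
exact: le_trans (lip _ _ _ (tk1 _ (ltnW kK)) (tk1 _ kK)) (tk_step k).
Qed.

End Homotopy.

Section Factorization.
Variables (R : realType) (n : nat) (nu : 'I_n -> R[i]) (E : 'M[R[i]]_n).
Hypothesis esum_small : esum E <= 1 / 4.
Local Notation lam := (lam nu).

Lemma tracks_close m : tracks nu E 1 m -> forall j : 'I_n,
  normc (nth 0 m j - lam j) <= 2 * 8 ^+ n * esum E * normc (lam j).
Proof.
case=> _ _ mdisc j; have [b jb mb] := mdisc j.
have [bj bjd] := connect_overlap_le esum_small jb.
have := le_normcD (nth 0 m j - lam b) (lam b - lam j); rewrite addrA subrK.
have := ler_wpM2l (esum_ge0 E) bj; move: mb; rewrite /in_disc; lra.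
Qed.

Lemma char_poly_Mt1_factor : exists r : 'I_n -> R[i],
  (forall j, normc (r j) <= 2 * 8 ^+ n * esum E) /\
  char_poly (Mt nu E 1) = \prod_(j < n) ('X - (nu j ^+ 2 * (1 + r j))%:P).
Proof.
have [m tm] := tracks_Mt1 nu esum_small; have close := tracks_close tm.
exists (fun j => if lam j == 0 then 0 else nth 0 m j / lam j - 1); split.
  move=> j; case: eqP => [_|/eqP lj]; first by rewrite normc0 !mulr_ge0 ?esum_ge0 ?exprn_ge0.
  have lj0 : 0 < normc (lam j) by rewrite lt_def normc_eq0 lj normc_ge0.
  have -> : nth 0 m j / lam j - 1 = (nth 0 m j - lam j) / lam j by field.
  by rewrite normcM normcV ler_pdivrMr.
case: tm => sm -> _; rewrite /poly_of_roots (big_nth 0) sm big_mkord.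
apply: eq_bigr => j _; congr ('X - _%:P); rewrite -/(lam j).
case: eqP => [lj|/eqP lj]; last by field.
have := close j; rewrite lj normc0 mulr0 subr0 mul0r => mj.
by apply/eqP; rewrite -normc_eq0 eq_le mj normc_ge0.
Qed.

End Factorization.

Section PowerBounds.
Variable R : realType.

Definition pow_bounded (f : R -> R) (N : nat) : Prop :=
  exists C h0 : R, 0 < h0 /\ forall h, 0 < h < h0 -> f h <= C * h ^+ N.

Lemma OinfE (g : R -> R[i]) :
  Oinf g <-> forall N, pow_bounded (fun h => normc (g h)) N.
Proof.
split=> gO N; have [C [h0 [h0_gt0 gC]]] := gO N; exists C, h0; split=> // h hh.
  by rewrite -lecR -normcE; apply: gC.
by rewrite normcE lecR; apply: gC.
Qed.

Lemma pow_bounded_sum (I : finType) (f : I -> R -> R) N :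
  (forall i, pow_bounded (f i) N) -> pow_bounded (fun h => \sum_i f i h) N.
Proof.
move=> /fin_all_exists [Ch /fin_all_exists [h0 fh0]].
exists (\sum_i Ch i), (\big[Order.min/1]_i h0 i); split.
  apply: (big_ind (fun x => 0 < x)) => // [x y x0 y0|i _]; first by rewrite lt_min x0.
  by case: (fh0 i).
move=> h /andP [h_gt0 hh]; rewrite mulr_suml; apply: ler_sum => i _.
case: (fh0 i) => _; apply; rewrite h_gt0 (lt_le_trans hh) //; exact: bigmin_le.
Qed.

Lemma pow_bounded_le (f g : R -> R) (c h1 : R) N : 0 < h1 -> 0 <= c ->
  (forall h, 0 < h < h1 -> f h <= c * g h) -> pow_bounded g N -> pow_bounded f N.
Proof.
move=> h1_gt0 c0 fg [C [h0 [h0_gt0 gC]]]; exists (c * C), (Order.min h0 h1).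
split=> [|h /andP [h_gt0]]; first by rewrite lt_min h0_gt0.
rewrite lt_min => /andP [hh0 hh1]; apply: le_trans (fg h _) _; first by rewrite h_gt0.
by rewrite -mulrA ler_wpM2l // gC // h_gt0.
Qed.

Lemma pow_bounded1_small (f : R -> R) (e : R) : 0 < e -> pow_bounded f 1 ->
  exists2 h0 : R, 0 < h0 & forall h, 0 < h < h0 -> f h <= e.
Proof.
move=> e_gt0 [C [h1 [h1_gt0 fC]]]; have C1 : 0 < `|C| + 1 by rewrite ltr_pwDr.
exists (Order.min h1 (e / (`|C| + 1))); first by rewrite lt_min h1_gt0 divr_gt0.
move=> h /andP [h_gt0]; rewrite lt_min => /andP [hh1]; rewrite ltr_pdivlMr // => he.
have := fC h; rewrite h_gt0 hh1 expr1 => /(_ isT) fh.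
have := ler_norm C; have := ler_wpM2r (ltW h_gt0) (ler_norm C); nra.
Qed.

End PowerBounds.

Lemma Mmat_Mt1 (R : realType) (n : nat) (nu : 'I_n -> R -> R[i]) (E : R -> 'M[R[i]]_n) h :
  Mmat nu E h = Mt (fun j => nu j h) (E h) 1.
Proof. by rewrite /Mmat /Mt /Dnu scale1r. Qed.

Unset Implicit Arguments.

Theorem lemma6p2 (R : realType) (n : nat) (hn : (1 <= n)%N)
  (nu : 'I_n -> R -> R[i]) (E : R -> 'M[R[i]]_n) (hE : MOinf E) :
  exists r : 'I_n -> R -> R[i],
    (forall j, Oinf (r j)) /\
    exists h0 : R, 0 < h0 /\
      forall h : R, 0 < h < h0 ->
        char_poly (Mmat nu E h) =
        \prod_(j < n) ('X - ((nu j h) ^+ 2 * (1 + r j h))%:P).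
Proof.
have esumO N : pow_bounded (fun h => esum (E h)) N.
  by do 2!apply: pow_bounded_sum => ?; apply: (iffLR (OinfE _)) (hE _ _) N.
have quarter : 0 < 1 / 4 :> R by rewrite divr_gt0.
have [h0 h0_gt0 small] := pow_bounded1_small quarter (esumO 1%N).
have /choice [r rP] : forall h, exists r : 'I_n -> R[i], esum (E h) <= 1 / 4 ->
    (forall j, normc (r j) <= 2 * 8 ^+ n * esum (E h)) /\
    char_poly (Mmat nu E h) = \prod_(j < n) ('X - ((nu j h) ^+ 2 * (1 + r j))%:P).
  move=> h; have [sh|] := boolP (esum (E h) <= 1 / 4); last by exists (fun=> 0) => /negP.
  have [r rb] := char_poly_Mt1_factor (fun j => nu j h) sh.
  by exists r => _; rewrite Mmat_Mt1.
exists (fun j h => r h j); split; last by exists h0; split => // h /small/rP [].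
move=> j; apply/OinfE => N; apply: (pow_bounded_le (c := 2 * 8 ^+ n)) h0_gt0 _ _ (esumO N).
  by rewrite mulr_ge0 ?exprn_ge0.
by move=> h /small/rP [+ _]; apply.
Qed.
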